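(* Let $f=(f_0,f_1)\in F\times F$ be such that $P_1^f\ll P_0^f$, and let $T$ be an anonymous comparison test that is error-free. Then $P_0^f(\{T(\cdot,f)=\tfrac12\})>0$.
   Context: Let $\Omega=\{0,1\}$ and let $\Omega^\infty$ be the set of infinite sequences $\omega=(\omega_1,\omega_2,\dots)$ with $\omega_t\in\Omega$; $\omega^t=(\omega_1,\dots,\omega_t)$ denotes the prefix of length $t$ and also the cylinder set $\{\hat\omega\in\Omega^\infty:\hat\omega^t=\omega^t\}$. $\Omega^\infty$ carries the $\sigma$-algebra generated by all cylinders. $\Delta(\Omega)$ is the set of probability distributions on $\Omega$. A forecasting strategy is a function $f:\bigcup_{t\ge 0}(\Omega\times\Delta(\Omega)\times\Delta(\Omega))^t\to\Delta(\Omega)$; $F$ denotes the set of all forecasting strategies. For a pair $f=(f_0,f_1)\in F\times F$ and $\omega\in\Omega^\infty$, the play path $h=h(\omega,f_0,f_1)$ is defined recursively by $h^0=\emptyset$ and $h^t=(h^{t-1},(\omega_t,f_0(h^{t-1}),f_1(h^{t-1})))$. The pair $f$ induces probability measures $P_0^f,P_1^f$ on $\Omega^\infty$ determined by $P_i^f(\omega^t)=\prod_{n=1}^t f_i(h^{n-1}(\omega,f_0,f_1))[\omega_n]$. A comparison test is a function $T:\Omega^\infty\times F\times F\to\{0,\tfrac12,1\}$, measurable in $\omega$ for each fixed pair. Write $\{T(\cdot,f)=k\}=\{\omega: T(\omega,f_0,f_1)=k\}$. $T$ is anonymous if $T(\omega,f_0,f_1)=1-T(\omega,f_1,f_0)$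 for all $\omega,f_0,f_1$. $T$ is error-free if for all $f\in F\times F$ and $i\in\{0,1\}$, $P_{1-i}^f(\{T(\cdot,f)=i\})=0$. *)

From Stdlib Require Import Reals List.
Import ListNotations.
Open Scope R_scope.

(* Omega = {0,1} is encoded as bool (false = 0, true = 1). *)
Definition Dist : Type :=
  { d : bool -> R | (forall b, 0 <= d b) /\ d false + d true = 1 }.
Definition dprob (d : Dist) (b : bool) : R := proj1_sig d b.

(* Infinite sequences; omega_t (t >= 1) is  w (t-1). *)
Definition Seq : Type := nat -> bool.

(* Histories: finite sequences of triples (omega_t, forecast_0, forecast_1),
   oldest first. *)
Definition History : Type := list (bool * Dist * Dist).

Definition Strategy : Type := History -> Dist.

Fixpoint hist (f0 f1 : Strategy) (w : Seq) (t : nat) : History :=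
  match t with
  | O => []
  | S n => hist f0 f1 w n ++ [(w n, f0 (hist f0 f1 w n), f1 (hist f0 f1 w n))]
  end.

Definition pick (f0 f1 : Strategy) (i : bool) : Strategy :=
  if i then f1 else f0.

Fixpoint cyl_prob (f0 f1 : Strategy) (i : bool) (w : Seq) (t : nat) : R :=
  match t with
  | O => 1
  | S n => cyl_prob f0 f1 i w n * dprob (pick f0 f1 i (hist f0 f1 w n)) (w n)
  end.

Definition cyl (w : Seq) (t : nat) : Seq -> Prop :=
  fun w' => forall n, (n < t)%nat -> w' n = w n.

Inductive measurable : (Seq -> Prop) -> Prop :=
| meas_cyl : forall w t, measurable (cyl w t)
| meas_compl : forall A, measurable A -> measurable (fun x => ~ A x)
| meas_union : forall A : nat -> Seq -> Prop,
    (forall n, measurable (A n)) -> measurable (fun x => exists n, A n x)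
| meas_ext : forall A B, measurable A -> (forall x, A x <-> B x) -> measurable B.

Definition is_prob_measure (mu : (Seq -> Prop) -> R) : Prop :=
  (forall A, measurable A -> 0 <= mu A) /\
  mu (fun _ => True) = 1 /\
  (forall A : nat -> Seq -> Prop,
      (forall n, measurable (A n)) ->
      (forall m n x, m <> n -> A m x -> A n x -> False) ->
      infinite_sum (fun n => mu (A n)) (mu (fun x => exists n, A n x))).

(* mu is the measure P_i^f: a probability measure with the prescribed
   cylinder values (unique by Caratheodory/Dynkin). *)
Definition is_Pf (mu : (Seq -> Prop) -> R) (f0 f1 : Strategy) (i : bool) : Prop :=
  is_prob_measure mu /\ forall w t, mu (cyl w t) = cyl_prob f0 f1 i w t.

Definition abs_cont (nu mu : (Seq -> Prop) -> R) : Prop :=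
  forall A, measurable A -> mu A = 0 -> nu A = 0.

Definition is_comparison_test (T : Seq -> Strategy -> Strategy -> R) : Prop :=
  (forall w f0 f1, T w f0 f1 = 0 \/ T w f0 f1 = 1/2 \/ T w f0 f1 = 1) /\
  (forall f0 f1 k, measurable (fun w => T w f0 f1 = k)).

Definition anonymous (T : Seq -> Strategy -> Strategy -> R) : Prop :=
  forall w f0 f1, T w f0 f1 = 1 - T w f1 f0.

Definition error_free (T : Seq -> Strategy -> Strategy -> R)
  (P : Strategy -> Strategy -> bool -> (Seq -> Prop) -> R) : Prop :=
  forall f0 f1,
    P f0 f1 true (fun w => T w f0 f1 = 0) = 0 /\
    P f0 f1 false (fun w => T w f0 f1 = 1) = 0.

(* If the tie event {T = 1/2} were P_0-null, then, since P_0 already ignores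
   {T = 1} by error-freeness, P_0 would be carried by {T = 0}; by absolute
   continuity so would P_1, contradicting error-freeness P_1({T = 0}) = 0. *)

From Stdlib Require Import Reals List Lra Lia FunctionalExtensionality PropExtensionality Classical.
Open Scope R_scope.

Lemma measurable_setT : measurable (fun _ => True).
Proof.
  apply (meas_ext (cyl (fun _ => true) 0)); [apply meas_cyl |].
  intros x; split; [auto | intros _ n Hn; lia].
Qed.

Lemma measurable_set0 : measurable (fun _ => False).
Proof.
  apply (meas_ext (fun x => ~ True)); [apply meas_compl, measurable_setT | tauto].
Qed.

Lemma infinite_sum_const_self_eq0 (c : R) :
  0 <= c -> infinite_sum (fun _ => c) c -> c = 0.
Proof.
  intros Hc Hsum.
  pose proof (sum_incr (fun _ => c) 1 c Hsum (fun _ => Hc)) as Hle.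
  simpl in Hle; lra.
Qed.

Lemma infinite_sum_two (a b : R) :
  infinite_sum (fun n => match n with 0%nat => a | 1%nat => b | _ => 0 end) (a + b).
Proof.
  intros eps Heps; exists 1%nat; intros n Hn.
  replace (sum_f_R0 _ n) with (a + b).
  - unfold Rdist; rewrite Rminus_diag, Rabs_R0; exact Heps.
  - induction n as [| n IH]; [lia |].
    destruct n as [| n]; [simpl; ring |].
    simpl sum_f_R0 in *; rewrite <- IH by lia; ring.
Qed.

Section ProbabilityMeasure.

Variable mu : (Seq -> Prop) -> R.
Hypothesis Hmu : is_prob_measure mu.

Lemma measure_ext (A B : Seq -> Prop) : (forall x, A x <-> B x) -> mu A = mu B.
Proof.
  intros HAB; f_equal; apply functional_extensionality; intro x.
  apply propositional_extensionality; auto.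
Qed.

Lemma measure_set0 : mu (fun _ => False) = 0.
Proof.
  destruct Hmu as [Hge0 [_ Hadd]].
  apply infinite_sum_const_self_eq0; [apply Hge0, measurable_set0 |].
  pose proof (Hadd (fun _ _ => False) (fun _ => measurable_set0)
    (fun _ _ _ _ h _ => h)) as Hsum; cbv beta in Hsum.
  rewrite (measure_ext (fun x => exists _ : nat, False) (fun _ => False))
    in Hsum by firstorder.
  exact Hsum.
Qed.

Lemma measure_union2 (A B : Seq -> Prop) :
  measurable A -> measurable B -> (forall x, A x -> B x -> False) ->
  mu (fun x => A x \/ B x) = mu A + mu B.
Proof.
  intros HA HB Hdisj.
  destruct Hmu as [_ [_ Hadd]].
  set (S n := match n with 0%nat => A | 1%nat => B | _ => fun _ => False end).
  assert (HS : forall n, measurable (S n)).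
  { intros [| [| n]]; [exact HA | exact HB | exact measurable_set0]. }
  assert (HSdisj : forall m n x, m <> n -> S m x -> S n x -> False).
  { intros [| [| m]] [| [| n]] x Hmn; simpl; try tauto;
      try (intros; eapply Hdisj; eauto); congruence. }
  apply (uniqueness_sum (fun n => mu (S n))).
  - rewrite (measure_ext _ (fun x => exists n, S n x)).
    + exact (Hadd S HS HSdisj).
    + intros x; split.
      * intros [h | h]; [exists 0%nat | exists 1%nat]; exact h.
      * intros [[| [| n]] h]; simpl in h; tauto.
  - replace (fun n => mu (S n))
      with (fun n => match n with 0%nat => mu A | 1%nat => mu B | _ => 0 end).
    + apply infinite_sum_two.
    + apply functional_extensionality; intros [| [| n]]; simpl;
        [reflexivity | reflexivity | symmetry; apply measure_set0].
Qed.

Lemma measure_compl (A : Seq -> Prop) : measurable A -> mu (fun x => ~ A x) = 1 - mu A.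
Proof.
  intros HA.
  rewrite <- (proj1 (proj2 Hmu)).
  rewrite (measure_ext (fun _ => True) (fun x => A x \/ ~ A x))
    by (intros x; split; [intros _; apply classic | auto]).
  rewrite measure_union2 by (auto using meas_compl).
  ring.
Qed.

End ProbabilityMeasure.

Lemma test_neq0_split (T : Seq -> Strategy -> Strategy -> R) (f0 f1 : Strategy) :
  is_comparison_test T ->
  forall w, ~ T w f0 f1 = 0 <-> T w f0 f1 = 1 \/ T w f0 f1 = 1/2.
Proof.
  intros [Hval _] w.
  destruct (Hval w f0 f1) as [h | [h | h]]; rewrite h; split; intros; lra.
Qed.

Theorem mainTheorem2
  (P : Strategy -> Strategy -> bool -> (Seq -> Prop) -> R)
  (HP : forall g0 g1 i, is_Pf (P g0 g1 i) g0 g1 i)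
  (f0 f1 : Strategy)
  (Hac : abs_cont (P f0 f1 true) (P f0 f1 false))
  (T : Seq -> Strategy -> Strategy -> R)
  (HT : is_comparison_test T)
  (Hanon : anonymous T)
  (Herr : error_free T P) :
  P f0 f1 false (fun w => T w f0 f1 = 1/2) > 0.
Proof.
  pose proof (proj2 HT f0 f1) as Hmeas.
  destruct (Herr f0 f1) as [Hzero1 Hone0].
  destruct (HP f0 f1 false) as [Hmu0 _].
  destruct (HP f0 f1 true) as [Hmu1 _].
  assert (Htie_ge0 := proj1 Hmu0 _ (Hmeas (1/2))).
  apply Rnot_le_lt; intros Htie_le0.
  assert (Hnz0 : P f0 f1 false (fun w => ~ T w f0 f1 = 0) = 0).
  { rewrite (measure_ext _ _ _ (test_neq0_split T f0 f1 HT)).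
    rewrite measure_union2 by (auto; intros x -> ; lra).
    lra. }
  assert (Hnz1 := Hac _ (meas_compl _ (Hmeas 0)) Hnz0).
  rewrite measure_compl, Hzero1 in Hnz1 by auto.
  lra.
Qed.
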